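(* Let $n\geqslant 3$ and $N=2^n-1$. Let $$\mathcal{W}_n=\Big\{(x_1,\dots,x_n,y_1,\dots,y_n)\in\mathbb{Z}^{2n}:\ y_1\cdots y_n\neq 0,\ \sum_{i=1}^n x_i\prod_{j\neq i}y_j=0\Big\}$$ and let $\mathcal{A}_n$ be the set of $(\mathbf{x}';(z_h)_{1\leqslant h\leqslant N})\in\mathbb{Z}^n\times(\mathbb{Z}\smallsetminus\{0\})^{N}$ such that $(z_h)$ is reduced, $z_h>0$ whenever $s(h)\geqslant 2$, and $$\sum_{j=1}^n\Big(\prod_{1\leqslant h\leqslant N}z_h^{1-\varepsilon_j(h)}\Big)z_{2^{j-1}}x'_j=0.$$ Then the map $$(\mathbf{x}';(z_h))\longmapsto\Big(z_1x'_1,z_2x'_2,\dots,z_{2^{n-1}}x'_n,\ \prod_{h}z_h^{\varepsilon_1(h)},\dots,\prod_h z_h^{\varepsilon_n(h)}\Big)$$ is a bijection from $\mathcal{A}_n$ onto $\mathcal{W}_n$.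
   Context: For $h\in\{1,\dots,N\}$ write $h=\sum_j\varepsilon_j(h)2^{j-1}$ with $\varepsilon_j(h)\in\{0,1\}$ and $s(h)=\sum_j\varepsilon_j(h)$; $h\preceq\ell$ means $\varepsilon_j(h)\leqslant\varepsilon_j(\ell)$ for all $j$. An $N$-tuple of nonzero integers $(z_h)$ is reduced if $\gcd(z_h,z_\ell)=1$ whenever $h,\ell$ are incomparable for $\preceq$. Note $z_{2^{j-1}}$ is the entry with index $h=2^{j-1}$. *)

From mathcomp Require Import all_boot all_order all_algebra.
Set Implicit Arguments. Unset Strict Implicit. Unset Printing Implicit Defensive.
Import Order.TTheory GRing.Theory Num.Theory.
Local Open Scope ring_scope.

Definition NN (n : nat) : nat := (2 ^ n - 1)%N.

(* Binary digits, with 0-based digit index: eps j h = epsilon_{j+1}(h)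
   in the paper's 1-based notation, i.e. h = sum_j eps j h * 2^j. *)
Definition eps (j h : nat) : bool := odd (h %/ 2 ^ j).

(* s(h) = number of binary digits 1 of h (for h < 2^n all digits are < n) *)
Definition sdig (n h : nat) : nat := (\sum_(j < n) eps j h)%N.

(* h \preceq l : digitwise comparison (digits of index >= n vanish for h,l <= N) *)
Definition preceq (n h l : nat) : bool := [forall j : 'I_n, eps j h ==> eps j l].

(* The tuple z = (z_1,...,z_N) is stored 0-based; zv z h = z_h for 1 <= h <= N. *)
Definition zv (n : nat) (z : (NN n).-tuple int) (h : nat) : int := nth 0 z h.-1.

Definition reduced (n : nat) (z : (NN n).-tuple int) : Prop :=
  forall h l : nat, (1 <= h <= NN n)%N -> (1 <= l <= NN n)%N ->
    ~~ preceq n h l -> ~~ preceq n l h -> gcdz (zv z h) (zv z l) = 1.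

Definition zprod (n : nat) (z : (NN n).-tuple int) (e : nat -> nat) : int :=
  \prod_(1 <= h < (NN n).+1) zv z h ^+ e h.

Definition inA (n : nat) (a : {ffun 'I_n -> int} * (NN n).-tuple int) : Prop :=
  let: (x', z) := a in
  [/\ forall h, (1 <= h <= NN n)%N -> zv z h != 0,
      reduced z,
      forall h, (1 <= h <= NN n)%N -> (2 <= sdig n h)%N -> 0 < zv z h &
      \sum_(j < n) zprod z (fun h => (1 - eps j h)%N) * zv z (2 ^ j) * x' j = 0].

Definition inW (n : nat) (w : {ffun 'I_n -> int} * {ffun 'I_n -> int}) : Prop :=
  let: (x, y) := w in
  \prod_(i < n) y i != 0 /\
  \sum_(i < n) x i * \prod_(j < n | j != i) y j = 0.

Definition phiA (n : nat) (a : {ffun 'I_n -> int} * (NN n).-tuple int)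
  : {ffun 'I_n -> int} * {ffun 'I_n -> int} :=
  let: (x', z) := a in
  ([ffun j : 'I_n => zv z (2 ^ j) * x' j],
   [ffun j : 'I_n => zprod z (fun h => nat_of_bool (eps j h))]).

(* Write y_j = prod_h z_h^{eps_j(h)}.  Since s(h) >= 1 for h >= 1, the product of the y_k
   over k <> i equals C * prod_h z_h^{1 - eps_i(h)} with C = prod_h z_h^{s(h) - 1} <> 0, so
   the equation of W_n is C times the equation of A_n.
   In a positive reduced family, the indices h with p | z_h form a chain for the digitwise
   order, since incomparable entries are coprime; its top element is the number whose binary
   digits are {j | p | y_j}.  Dividing that entry by p removes one prime from the y_j, so by
   induction the family is determined by the |y_j|; running the step backwards builds a
   family for any positive |y_j|.  Only the entries z_{2^j} may be negative, and they carry
   the signs of the y_j.  Finally z_{2^j} is coprime to prod_h z_h^{1 - eps_j(h)} and divides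
   every other term of the equation of A_n, hence divides x_j. *)

From mathcomp Require Import all_boot all_order all_algebra zify.
Set Implicit Arguments. Unset Strict Implicit. Unset Printing Implicit Defensive.
Import Order.TTheory GRing.Theory Num.Theory.

Lemma eps0 m : eps 0 m = odd m.
Proof. by rewrite /eps expn0 divn1. Qed.

Lemma epsS j m : eps j.+1 m = eps j m./2.
Proof. by rewrite /eps expnS divnMA divn2. Qed.

Lemma eps_of0 j : eps j 0 = false.
Proof. by rewrite /eps div0n. Qed.

Lemma eps_pow j k : eps j (2 ^ k) = (j == k).
Proof.
elim: j k => [|j IH] [|k]; rewrite ?eps0 ?epsS //.
- by rewrite expnS oddM.
- by rewrite eps_of0.
- by rewrite expnS mul2n doubleK IH.
Qed.

Lemma ltn_half_pow n h : h < 2 ^ n.+1 -> h./2 < 2 ^ n.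
Proof. by rewrite ltn_half_double -mul2n -expnS. Qed.

Lemma digits_inj n h l : h < 2 ^ n -> l < 2 ^ n ->
  (forall j : 'I_n, eps j h = eps j l) -> h = l.
Proof.
elim: n h l => [|n IH] h l; first by rewrite !ltnS !leqn0 => /eqP-> /eqP->.
move=> /ltn_half_pow hlt /ltn_half_pow llt eq_eps.
rewrite -[h]odd_double_half -[l]odd_double_half -!eps0 (eq_eps ord0).
by congr (_ + _.*2); apply: IH => // j; rewrite -!epsS (eq_eps (lift ord0 j)).
Qed.

Lemma has_digit n h : 0 < h < 2 ^ n -> exists j : 'I_n, eps j h.
Proof.
case/andP=> h_gt0 hlt; apply/existsP; apply: contraTT h_gt0 => /existsPn no_digit.
rewrite -leqNgt leqn0; apply/eqP/(digits_inj hlt); first by rewrite expn_gt0.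
by move=> j; rewrite eps_of0; apply/negbTE.
Qed.

Lemma preceq_leq n h l : h < 2 ^ n -> preceq n h l -> h <= l.
Proof.
elim: n h l => [|n IH] h l; first by rewrite ltnS leqn0 => /eqP->.
move=> /ltn_half_pow hlt /forallP le_hl.
rewrite -[h]odd_double_half -[l]odd_double_half leq_add //.
  by have := le_hl ord0; rewrite !eps0; case: (odd h); case: (odd l).
rewrite leq_double; apply: IH => //; apply/forallP => j.
by have := le_hl (lift ord0 j); rewrite !epsS.
Qed.

Lemma exists_digits n (P : pred 'I_n) :
  exists2 h, h < 2 ^ n & forall j : 'I_n, eps j h = P j.
Proof.
elim: n P => [|n IH] P; first by exists 0 => // [[]].
have [h hlt eps_h] := IH (fun j => P (lift ord0 j)).
exists (P ord0 + h.*2).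
  by rewrite expnS mul2n; case: (P ord0); rewrite /= ?add0n ?ltn_double // -doubleS leq_double.
move=> j; case: (unliftP ord0 j) => [j' ->|->].
  by rewrite /= epsS half_bit_double eps_h.
by rewrite eps0 oddD odd_double addbF oddb.
Qed.

Lemma index_rangeE n h : (1 <= h <= NN n) = (0 < h < 2 ^ n).
Proof. by rewrite /NN; have := expn_gt0 2 n; lia. Qed.

Lemma pow_in_range n (k : 'I_n) : 1 <= 2 ^ k <= NN n.
Proof. by rewrite index_rangeE expn_gt0 ltn_exp2l ?ltn_ord. Qed.

Lemma sdig_pow n (k : 'I_n) : sdig n (2 ^ k) = 1.
Proof.
rewrite /sdig (bigD1 k) //= eps_pow eqxx big1 // => j.
by rewrite eps_pow val_eqE => /negbTE ->.
Qed.

Lemma sdig_le1_pow n h : 0 < h < 2 ^ n -> sdig n h <= 1 -> exists j : 'I_n, h = 2 ^ j.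
Proof.
move=> h_range; have [j hj] := has_digit h_range.
rewrite /sdig (bigD1 j) //= hj add1n ltnS leqn0 sum_nat_eq0 => /forall_inP others.
exists j; apply: (digits_inj (proj2 (andP h_range))); first by rewrite ltn_exp2l.
move=> i; rewrite eps_pow val_eqE; case: eqVneq => [-> //|ij].
by apply/negbTE; have := others i ij; rewrite eqb0.
Qed.

Lemma sdig_ge2 n h (j : 'I_n) : 0 < h < 2 ^ n -> eps j h -> h != 2 ^ j -> 1 < sdig n h.
Proof.
move=> h_range hj; rewrite ltnNge; apply: contra => /(sdig_le1_pow h_range) [i eq_h].
by move: hj; rewrite eq_h eps_pow => /eqP->.
Qed.

Lemma sdig_split n h (i : 'I_n) : 0 < h < 2 ^ n ->
  \sum_(k < n | k != i) eps k h = (sdig n h - 1) + (1 - eps i h).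
Proof.
move=> /has_digit [j hj].
have : 0 < sdig n h by rewrite /sdig (bigD1 j) //= hj.
rewrite /sdig (bigD1 i) //=; set S := \sum_(k < n | k != i) _.
by case: (eps i h) => /=; lia.
Qed.

Lemma pow_incomparable n (j : 'I_n) h : 0 < h < 2 ^ n -> ~~ eps j h ->
  ~~ preceq n (2 ^ j) h /\ ~~ preceq n h (2 ^ j).
Proof.
move=> /has_digit [i hi] hj; split; apply/forallPn.
  by exists j; rewrite eps_pow eqxx (negbTE hj).
exists i; rewrite hi eps_pow /=; apply: contra hj => /eqP ij.
by rewrite -ij.
Qed.

Lemma preceq_refl n h : preceq n h h.
Proof. by apply/forallP => j; apply: implybb. Qed.

Lemma bigD1_index_iota (R : Type) (idx : R) (op : Monoid.com_law idx) m k l (F : nat -> R) :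
  m <= l < k ->
  \big[op/idx]_(m <= h < k) F h = op (F l) (\big[op/idx]_(m <= h < k | h != l) F h).
Proof. by move=> l_range; rewrite (bigD1_seq l) ?mem_index_iota ?iota_uniq. Qed.
Arguments bigD1_index_iota {R idx op m k} l {F}.

Lemma ltn_sum_scaled n (f g : 'I_n -> nat) (e : pred 'I_n) p j :
  1 < p -> e j -> 0 < g j -> (forall i, f i = g i * p ^ e i) ->
  \sum_i g i < \sum_i f i.
Proof.
move=> p_gt1 ej gj_gt0 fE; rewrite (bigD1 j) // [X in _ < X](bigD1 j) //= -addSn.
rewrite leq_add //; first by rewrite fE ej expn1 ltn_Pmulr.
by apply: leq_sum => i _; rewrite fE leq_pmulr // expn_gt0 ltnW.
Qed.

Section ReducedFamilies.
Variable n : nat.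
Implicit Types (Z W : nat -> nat) (p H : nat) (i j : 'I_n).

Definition yprod Z (j : 'I_n) := \prod_(1 <= h < (NN n).+1) Z h ^ eps j h.

Definition positive_family Z := forall h, 1 <= h <= NN n -> 0 < Z h.

Definition reduced_family Z := forall h l, 1 <= h <= NN n -> 1 <= l <= NN n ->
  ~~ preceq n h l -> ~~ preceq n l h -> coprime (Z h) (Z l).

Definition divide_at Z H p h := if h == H then Z h %/ p else Z h.

Definition multiply_at Z H p h := if h == H then Z h * p else Z h.

Lemma dvdn_yprod Z j l : 1 <= l <= NN n -> eps j l -> Z l %| yprod Z j.
Proof.
by move=> l_range jl; rewrite /yprod (bigD1_index_iota l) ?ltnS // jl expn1 dvdn_mulr.
Qed.

Lemma yprod_gt0 Z j : positive_family Z -> 0 < yprod Z j.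
Proof.
move=> Zpos; rewrite /yprod big_seq prodn_cond_gt0 // => h.
by rewrite mem_index_iota ltnS => /Zpos Zh; rewrite expn_gt0 Zh.
Qed.

Lemma prime_dvd_yprod Z j p : prime p -> p %| yprod Z j ->
  exists l, [/\ 1 <= l <= NN n, eps j l & p %| Z l].
Proof.
move=> p_pr; rewrite /yprod Euclid_dvd_prod // big_has => /hasP [l].
by rewrite mem_index_iota ltnS Euclid_dvdX // lt0b => l_range /andP [pZl jl]; exists l.
Qed.

Lemma yprod_eq1 Z : (forall j, yprod Z j = 1) -> forall h, 1 <= h <= NN n -> Z h = 1.
Proof.
move=> Y1 h h_range; have [j hj] : exists j : 'I_n, eps j h.
  by apply: has_digit; rewrite -index_rangeE.
by apply/eqP; rewrite -dvdn1 -(Y1 j) dvdn_yprod.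
Qed.

Lemma yprod_update Z Z' H c i : 1 <= H <= NN n ->
  (forall h, h != H -> Z h = Z' h) -> Z H = Z' H * c ->
  yprod Z i = yprod Z' i * c ^ eps i H.
Proof.
move=> H_range eqZ ZH; rewrite /yprod !(bigD1_index_iota H) ?ltnS //.
rewrite (eq_bigr (fun h => Z' h ^ eps i h)); last by move=> h /eqZ ->.
by rewrite ZH expnMn mulnAC.
Qed.

Lemma top_of_prime_support Z p j : reduced_family Z -> prime p -> p %| yprod Z j ->
  exists H, [/\ 1 <= H <= NN n, p %| Z H & forall i, eps i H = (p %| yprod Z i)].
Proof.
move=> Zred p_pr p_dvd; pose S h := (1 <= h <= NN n) && (p %| Z h).
have S_ub h : S h -> h <= NN n by case/andP => /andP [].
have S_ex : exists h, S h.
  by have [l [l_range _ pZl]] := prime_dvd_yprod p_pr p_dvd; exists l; apply/andP.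
have [H /andP [H_range pZH] H_max] := ex_maxnP S_ex S_ub.
have below_H l : 1 <= l <= NN n -> p %| Z l -> preceq n l H.
  move=> l_range pZl; apply: contraT => not_lH.
  have [le_Hl | not_Hl] := boolP (preceq n H l).
    have H_lt : H < 2 ^ n by move: H_range; rewrite index_rangeE => /andP [].
    suff eq_lH : l = H by rewrite eq_lH preceq_refl in not_lH.
    by apply/eqP; rewrite eqn_leq H_max ?(preceq_leq H_lt) //; apply/andP.
  have /(coprime_dvdl pZH) := Zred _ _ H_range l_range not_Hl not_lH.
  by rewrite prime_coprime // pZl.
exists H; split => // i; apply/idP/idP => [iH | /(prime_dvd_yprod p_pr) [l [l_range il pZl]]].
  exact: dvdn_trans pZH (dvdn_yprod _ H_range iH).
by have /forallP /(_ i) := below_H l l_range pZl; rewrite il.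
Qed.

Lemma positive_divide_at Z H p : 0 < p -> p %| Z H ->
  positive_family Z -> positive_family (divide_at Z H p).
Proof.
move=> p_gt0 pZH Zpos h h_range; rewrite /divide_at.
have [eq_hH | _] := eqVneq h H; last exact: Zpos.
by rewrite divn_gt0 // dvdn_leq ?Zpos // eq_hH.
Qed.

Lemma reduced_divide_at Z H p : p %| Z H ->
  reduced_family Z -> reduced_family (divide_at Z H p).
Proof.
move=> pZH Zred; have dvd_Z h : divide_at Z H p h %| Z h.
  by rewrite /divide_at; have [-> | _] := eqVneq h H; [apply: dvdn_div | apply: dvdnn].
move=> h l h_range l_range not_hl not_lh.
apply: coprime_dvdl (dvd_Z h) (coprime_dvdr (dvd_Z l) _).
exact: Zred.
Qed.

Lemma yprod_divide_at Z H p i : 1 <= H <= NN n -> p %| Z H ->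
  yprod Z i = yprod (divide_at Z H p) i * p ^ eps i H.
Proof.
move=> H_range pZH; apply: yprod_update => // [h /negbTE hH|].
  by rewrite /divide_at hH.
by rewrite /divide_at eqxx divnK.
Qed.

Lemma positive_multiply_at Z H p : 0 < p ->
  positive_family Z -> positive_family (multiply_at Z H p).
Proof.
move=> p_gt0 Zpos h h_range; rewrite /multiply_at.
by case: ifP => _; rewrite ?muln_gt0 Zpos ?p_gt0.
Qed.

Lemma reduced_multiply_at Z H p : prime p -> reduced_family Z ->
  (forall l, 1 <= l <= NN n -> p %| Z l -> preceq n l H) ->
  reduced_family (multiply_at Z H p).
Proof.
move=> p_pr Zred below_H h l h_range l_range.
wlog lH : h l h_range l_range / l != H => [wlog_lH not_hl not_lh|].
  have [eq_lH | lH] := eqVneq l H; last exact: wlog_lH.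
  rewrite coprime_sym wlog_lH //; apply: contraNneq not_hl => eq_hH.
  by rewrite eq_hH -eq_lH preceq_refl.
move=> not_hl not_lh; rewrite /multiply_at (negbTE lH).
have [eq_hH | _] := eqVneq h H; last exact: Zred.
rewrite coprimeMl Zred //= prime_coprime //.
by apply: contra not_lh => /(below_H l l_range); rewrite eq_hH.
Qed.

Lemma yprod_multiply_at Z H p i : 1 <= H <= NN n ->
  yprod (multiply_at Z H p) i = yprod Z i * p ^ eps i H.
Proof.
move=> H_range; apply: yprod_update => // [h /negbTE hH|].
  by rewrite /multiply_at hH.
by rewrite /multiply_at eqxx.
Qed.

Lemma yprod_inj Z W : positive_family Z -> positive_family W ->
  reduced_family Z -> reduced_family W -> (forall j, yprod Z j = yprod W j) ->
  forall h, 1 <= h <= NN n -> Z h = W h.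
Proof.
have [s] := ubnP (\sum_(j < n) yprod Z j).
elim: s Z W => // s IH Z W; rewrite ltnS => le_Ys Zpos Wpos Zred Wred eqY.
case: (boolP [exists j : 'I_n, 1 < yprod Z j]) => [/existsP [j Yj_gt1] | /existsPn Y_le1];
  last first.
  have Y1 j : yprod Z j = 1 by apply/eqP; rewrite eqn_leq leqNgt Y_le1 yprod_gt0.
  have Y1W j : yprod W j = 1 by rewrite -eqY.
  by move=> h h_range; rewrite (yprod_eq1 Y1) ?(yprod_eq1 Y1W).
have p_pr : prime (pdiv (yprod Z j)) by apply: pdiv_prime.
set p := pdiv _ in p_pr; have p_gt0 := prime_gt0 p_pr.
have pYZ : p %| yprod Z j by apply: pdiv_dvd.
have pYW : p %| yprod W j by rewrite -eqY.
have [H [H_range pZH suppZ]] := top_of_prime_support Zred p_pr pYZ.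
have [H' [H'_range pWH' suppW]] := top_of_prime_support Wred p_pr pYW.
have eq_H'H : H' = H.
  move: H_range H'_range; rewrite !index_rangeE => /andP [_ H_lt] /andP [_ H'_lt].
  by apply: (digits_inj H'_lt H_lt) => i; rewrite suppZ suppW eqY.
subst H'.
have YZ i := yprod_divide_at i H_range pZH.
have YW i := yprod_divide_at i H_range pWH'.
have eqY' i : yprod (divide_at Z H p) i = yprod (divide_at W H p) i.
  have p_eps_gt0 : 0 < p ^ eps i H by rewrite expn_gt0 p_gt0.
  by apply/eqP; rewrite -(eqn_pmul2r p_eps_gt0) -YZ -YW eqY.
have lt_Y's : \sum_(i < n) yprod (divide_at Z H p) i < s.
  have jH : eps j H by rewrite suppZ.
  apply: leq_trans _ le_Ys; apply: (ltn_sum_scaled (prime_gt1 p_pr) jH _ YZ).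
  exact/yprod_gt0/positive_divide_at.
move=> h h_range; have := IH _ _ lt_Y's (positive_divide_at p_gt0 pZH Zpos)
  (positive_divide_at p_gt0 pWH' Wpos) (reduced_divide_at pZH Zred)
  (reduced_divide_at pWH' Wred) eqY' h h_range.
rewrite /divide_at; case: eqVneq => [-> | //].
by rewrite -{2}(divnK pZH) -{2}(divnK pWH') => ->.
Qed.

Lemma exists_reduced_family (y : 'I_n -> nat) : (forall j, 0 < y j) ->
  exists Z, [/\ positive_family Z, reduced_family Z & forall j, yprod Z j = y j].
Proof.
have [s] := ubnP (\sum_(j < n) y j); elim: s y => // s IH y; rewrite ltnS => le_ys y_gt0.
case: (boolP [exists j : 'I_n, 1 < y j]) => [/existsP [j yj_gt1] | /existsPn y_le1];
  last first.
  exists (fun=> 1); split=> [//|h l *|i]; first exact: coprime1n.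
  rewrite /yprod big1 => [|h _]; last exact: exp1n.
  by apply/eqP; rewrite eq_sym eqn_leq leqNgt y_le1 y_gt0.
have p_pr : prime (pdiv (y j)) by apply: pdiv_prime.
set p := pdiv _ in p_pr; have p_gt0 := prime_gt0 p_pr.
have [H H_lt suppH] := exists_digits (fun i => p %| y i).
have jH : eps j H by rewrite suppH pdiv_dvd.
have H_range : 1 <= H <= NN n.
  by rewrite index_rangeE H_lt andbT lt0n; apply: contraTneq jH => ->; rewrite eps_of0.
pose y' i := y i %/ p ^ eps i H.
have yE i : y i = y' i * p ^ eps i H.
  rewrite divnK //; case: (eps i H) (suppH i) => [/esym pyi | _].
    by rewrite expn1.
  by rewrite expn0 dvd1n.
have y'_gt0 i : 0 < y' i.
  by have := y_gt0 i; rewrite yE muln_gt0 => /andP [].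
have lt_y's : \sum_(i < n) y' i < s.
  exact: leq_trans (ltn_sum_scaled (prime_gt1 p_pr) jH (y'_gt0 j) yE) le_ys.
have [Z [Zpos Zred Zy']] := IH y' lt_y's y'_gt0.
exists (multiply_at Z H p); split.
- exact: positive_multiply_at.
- apply: reduced_multiply_at => // l l_range pZl; apply/forallP => i; apply/implyP => il.
  rewrite suppH; apply: contraLR pZl => not_pyi.
  have := dvdn_yprod Z l_range il; rewrite Zy' /y' suppH (negbTE not_pyi) expn0 divn1.
  by move=> Zl_dvd; apply: contra not_pyi => /dvdn_trans; apply.
- by move=> i; rewrite yprod_multiply_at // Zy' -yE.
Qed.

End ReducedFamilies.

Section IntegerFamilies.
Local Open Scope ring_scope.
Variable n : nat.
Implicit Types (z w : (NN n).-tuple int) (i j k : 'I_n) (e : nat -> nat)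
  (a b : {ffun 'I_n -> int} * (NN n).-tuple int).

Definition zabs z h := `|zv z h|%N.

Definition admissible z := [/\ forall h, (1 <= h <= NN n)%N -> zv z h != 0, reduced z &
  forall h, (1 <= h <= NN n)%N -> (2 <= sdig n h)%N -> 0 < zv z h].

Lemma abs_zprod z e : `|zprod z e|%N = (\prod_(1 <= h < (NN n).+1) zabs z h ^ e h)%N.
Proof.
rewrite /zprod (big_morph (fun x : int => `|x|%N) abszM (erefl : `|1%R : int|%N = 1%N)).
by apply: eq_bigr => h _; rewrite abszX.
Qed.

Lemma yprod_zabs z j : yprod (zabs z) j = `|zprod z (fun h => eps j h)|%N.
Proof. by rewrite abs_zprod. Qed.

Lemma zabs_reduced z : reduced z -> reduced_family n (zabs z).
Proof.
move=> zred h l h_range l_range not_hl not_lh.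
by move: (zred h l h_range l_range not_hl not_lh) => [gcd1]; rewrite /coprime gcd1.
Qed.

Lemma zabs_positive z : (forall h, (1 <= h <= NN n)%N -> zv z h != 0) ->
  positive_family n (zabs z).
Proof. by move=> znz h h_range; rewrite absz_gt0 znz. Qed.

Lemma zprod_neq0 z e : (forall h, (1 <= h <= NN n)%N -> zv z h != 0) -> zprod z e != 0.
Proof.
move=> znz; rewrite /zprod big_seq prodf_seq_neq0; apply/allP => h.
by rewrite mem_index_iota ltnS => h_range; apply/implyP => _; rewrite expf_neq0 ?znz.
Qed.

Lemma zprod_eps_pow z j : zprod z (fun h => eps j h) =
  zv z (2 ^ j)%N * \prod_(1 <= h < (NN n).+1 | h != (2 ^ j)%N) zv z h ^+ eps j h.
Proof.
by rewrite /zprod (bigD1_index_iota (2 ^ j)%N) ?ltnS ?pow_in_range // eps_pow eqxx expr1.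
Qed.

Lemma prod_zprod_eps z i :
  \prod_(k < n | k != i) zprod z (fun h => eps k h) =
  zprod z (fun h => sdig n h - 1)%N * zprod z (fun h => 1 - eps i h)%N.
Proof.
rewrite /zprod exchange_big -big_split /= big_seq [RHS]big_seq; apply: eq_bigr => h.
rewrite mem_index_iota ltnS index_rangeE => h_range.
by rewrite prodrXr -exprD sdig_split.
Qed.

Lemma sum_mul_prod_zprod_eps z (x : 'I_n -> int) :
  \sum_(i < n) x i * \prod_(k < n | k != i) zprod z (fun h => eps k h) =
  zprod z (fun h => sdig n h - 1)%N * \sum_(i < n) zprod z (fun h => 1 - eps i h)%N * x i.
Proof.
rewrite mulr_sumr; apply: eq_bigr => i _.
by rewrite prod_zprod_eps mulrCA [x i * _]mulrC.
Qed.

Lemma phiA_inW a : inA a -> inW (phiA a).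
Proof.
case: a => x' z [znz _ _ eqA]; split.
  by apply/prodf_neq0 => i _; rewrite ffunE zprod_neq0.
rewrite (eq_bigr (fun i => zv z (2 ^ i)%N * x' i *
  \prod_(k < n | k != i) zprod z (fun h => eps k h))) => [|i _]; last first.
  by rewrite ffunE; congr (_ * _); apply: eq_bigr => k _; rewrite ffunE.
rewrite sum_mul_prod_zprod_eps; under eq_bigr do rewrite mulrA.
by rewrite eqA mulr0.
Qed.

Lemma eq_tuple_zv z w : (forall h, (1 <= h <= NN n)%N -> zv z h = zv w h) -> z = w.
Proof.
move=> eq_zw; apply: eq_from_tnth => i; rewrite !(tnth_nth 0).
by have := eq_zw i.+1; rewrite /zv /=; apply; rewrite ltn_ord.
Qed.

Lemma admissible_inj z w : admissible z -> admissible w ->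
  (forall j, zprod z (fun h => eps j h) = zprod w (fun h => eps j h)) -> z = w.
Proof.
move=> [znz zred zpos] [wnz wred wpos] eqY.
have eq_abs : forall h, (1 <= h <= NN n)%N -> zabs z h = zabs w h.
  apply: yprod_inj; try exact: zabs_positive; try exact: zabs_reduced.
  by move=> j; rewrite !yprod_zabs eqY.
have eq_sdig_ge2 h : (1 <= h <= NN n)%N -> (2 <= sdig n h)%N -> zv z h = zv w h.
  move=> h_range h_ge2; rewrite -[zv z h]gtz0_abs ?zpos // -[zv w h]gtz0_abs ?wpos //.
  by have := eq_abs h h_range; rewrite /zabs => ->.
apply: eq_tuple_zv => h h_range; have [h_ge2 | ] := leqP 2 (sdig n h).
  exact: eq_sdig_ge2.
rewrite ltnS; move: h_range; rewrite index_rangeE => h_range.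
move=> /(sdig_le1_pow h_range) [j ->].
have eq_rest : \prod_(1 <= l < (NN n).+1 | l != (2 ^ j)%N) zv z l ^+ eps j l =
               \prod_(1 <= l < (NN n).+1 | l != (2 ^ j)%N) zv w l ^+ eps j l.
  rewrite big_seq_cond [RHS]big_seq_cond; apply: eq_bigr => l.
  rewrite mem_index_iota ltnS => /andP [l_range l_ne].
  have [jl | //] := boolP (eps j l).
  by rewrite eq_sdig_ge2 // (sdig_ge2 _ jl) // -index_rangeE.
have := eqY j; rewrite !zprod_eps_pow eq_rest; apply: mulIf.
rewrite big_seq_cond prodf_seq_neq0; apply/allP => l; rewrite mem_index_iota ltnS.
by move=> l_range; apply/implyP => _; rewrite expf_neq0 ?wnz.
Qed.

Lemma phiA_inj a b : inA a -> inA b -> phiA a = phiA b -> a = b.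
Proof.
case: a b => [x z] [x' w] [znz zred zpos _] [wnz wred wpos _] [/ffunP eqx /ffunP eqy].
have eq_zw : z = w.
  by apply: admissible_inj => // j; have := eqy j; rewrite !ffunE.
subst w; congr pair; apply/ffunP => j; apply: (mulfI (znz _ (pow_in_range j))).
by have := eqx j; rewrite !ffunE.
Qed.

Lemma exists_tuple_zv (f : nat -> int) :
  exists z : (NN n).-tuple int, forall h, (1 <= h <= NN n)%N -> zv z h = f h.
Proof.
exists [tuple of map f (iota 1 (NN n))] => h /andP [h_gt0 h_le].
have h_lt : (h.-1 < NN n)%N by rewrite prednK.
by rewrite /zv /= (nth_map 0) ?size_iota // nth_iota // add1n prednK.
Qed.

Lemma coprimez_zv_pow z j : reduced z ->
  coprimez (zv z (2 ^ j)%N) (zprod z (fun h => 1 - eps j h)%N).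
Proof.
move=> /zabs_reduced zred; rewrite coprimezE abs_zprod big_seq.
apply: (big_ind (coprime _)) => [|a b ca cb|h]; first exact: coprimen1.
  by rewrite coprimeMr ca cb.
rewrite mem_index_iota ltnS => h_range.
have [jh | not_jh] := boolP (eps j h); first by rewrite subnn coprimen1.
have [not_jh' not_hj] : ~~ preceq n (2 ^ j) h /\ ~~ preceq n h (2 ^ j).
  by apply: pow_incomparable not_jh; rewrite -index_rangeE.
by rewrite subn0 expn1 zred ?pow_in_range.
Qed.

Lemma dvdz_zv_pow z (x : 'I_n -> int) j : reduced z ->
  \sum_(i < n) zprod z (fun h => 1 - eps i h)%N * x i = 0 -> (zv z (2 ^ j)%N %| x j)%Z.
Proof.
move=> zred sum0; rewrite -(Gauss_dvdzr _ (coprimez_zv_pow j zred)).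
have -> : zprod z (fun h => 1 - eps j h)%N * x j =
          - \sum_(i < n | i != j) zprod z (fun h => 1 - eps i h)%N * x i.
  by apply/eqP; rewrite -addr_eq0; move: sum0; rewrite (bigD1 j) //= => ->.
rewrite rpredN; apply: rpred_sum => i ij; apply: dvdz_mulr.
rewrite /zprod (bigD1_index_iota (2 ^ j)%N) ?ltnS ?pow_in_range //.
by rewrite eps_pow val_eqE (negbTE ij) subn0 expr1 dvdz_mulr.
Qed.

Lemma exists_admissible (y : 'I_n -> int) : (forall j, y j != 0) ->
  exists z, admissible z /\ forall j, zprod z (fun h => eps j h) = y j.
Proof.
move=> y_neq0; have /exists_reduced_family [Z [Zpos Zred ZY]] : forall j, (0 < `|y j|)%N.
  by move=> j; rewrite absz_gt0.
pose sign h := \prod_(k < n | h == (2 ^ k)%N) sgz (y k).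
have [z zE] := exists_tuple_zv (fun h => (Z h)%:R * sign h).
have abs_sign h : `|sign h|%N = 1%N.
  apply: (big_ind (fun s => `|s|%N = 1%N)) => [//|s t abs_s abs_t|k _].
    by rewrite abszM abs_s abs_t.
  by have := y_neq0 k; case: sgzP.
have sign_other h : (forall k, h != (2 ^ k)%N) -> sign h = 1.
  by move=> not_pow; rewrite /sign big_pred0 // => k; apply/negbTE.
have sign_eps k h : sign h ^+ eps k h = if h == (2 ^ k)%N then sgz (y k) else 1.
  have [-> | not_pow] := eqVneq h (2 ^ k)%N.
    rewrite eps_pow eqxx /sign (big_pred1 k) // => k' /=.
    by rewrite eqn_exp2l // eq_sym val_eqE.
  have [kh | //] := boolP (eps k h); rewrite sign_other // => k'.
  by apply: contraNneq not_pow => eq_h; move: kh; rewrite eq_h eps_pow => /eqP->.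
have zabsE h : (1 <= h <= NN n)%N -> zabs z h = Z h.
  by move=> h_range; rewrite /zabs zE // abszM abs_sign muln1 natz absz_nat.
exists z; split; first split.
- by move=> h h_range; rewrite -absz_gt0 -/(zabs z h) zabsE ?Zpos.
- move=> h l h_range l_range not_hl not_lh.
  by rewrite /gcdz -!/(zabs z _) !zabsE // (eqP (Zred h l h_range l_range not_hl not_lh)).
- move=> h h_range h_ge2; rewrite zE // sign_other ?mulr1 ?ltr0n ?Zpos // => k.
  by apply: contraTneq h_ge2 => ->; rewrite sdig_pow.
move=> k; rewrite /zprod big_seq.
rewrite (eq_bigr (fun h => ((Z h)%:R * sign h) ^+ eps k h)); last first.
  by move=> h; rewrite mem_index_iota ltnS => /zE ->.
rewrite -big_seq; under eq_bigr do rewrite exprMn sign_eps.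
rewrite big_split /=.
have -> : \prod_(1 <= h < (NN n).+1) (Z h)%:R ^+ eps k h = (`|y k|%N)%:R :> int.
  by rewrite -ZY /yprod natr_prod; apply: eq_bigr => h _; rewrite natrX.
rewrite (bigD1_index_iota (2 ^ k)%N) ?ltnS ?pow_in_range // eqxx big1 => [|h /negbTE -> //].
by rewrite /= mulr1 natz mulrC -intEsg.
Qed.

Lemma phiA_surj (xy : {ffun 'I_n -> int} * {ffun 'I_n -> int}) :
  inW xy -> exists a, inA a /\ phiA a = xy.
Proof.
case: xy => x y [/prodf_neq0 y_neq0 sum0].
have [z [[znz zred zpos] zY]] := exists_admissible (fun j => y_neq0 j isT).
have sum0' : \sum_(i < n) zprod z (fun h => 1 - eps i h)%N * x i = 0.
  apply/eqP; rewrite -(mulrI_eq0 _ (mulfI (zprod_neq0 (fun h => sdig n h - 1)%N znz))).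
  rewrite -sum_mul_prod_zprod_eps -[X in _ == X]sum0; apply/eqP/eq_bigr => i _.
  by congr (_ * _); apply: eq_bigr => k _; rewrite zY.
pose x' := [ffun j : 'I_n => (x j %/ zv z (2 ^ j)%N)%Z].
have xE j : zv z (2 ^ j)%N * x' j = x j by rewrite ffunE mulrC divzK // dvdz_zv_pow.
exists (x', z); split.
  by split => //; rewrite -[RHS]sum0'; apply: eq_bigr => j _; rewrite -mulrA xE.
by congr (_, _); apply/ffunP => j; rewrite ffunE ?xE ?zY.
Qed.

End IntegerFamilies.

Theorem mainTheorem11 (n : nat) (hn : (3 <= n)%N) :
  (forall a, @inA n a -> @inW n (@phiA n a)) /\
  (forall a b, @inA n a -> @inA n b -> @phiA n a = @phiA n b -> a = b) /\
  (forall w, @inW n w -> exists a, @inA n a /\ @phiA n a = w).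
Proof. by split; [exact: phiA_inW | split; [exact: phiA_inj | exact: phiA_surj]]. Qed.
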